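(* Let $G_1,G_2$ be induced subgraphs of a graph $G$ with $V(G)=V(G_1)\cup V(G_2)$ and $E(G)=E(G_1)\cup E(G_2)$, let $S$ be the subgraph induced by $V(G_1)\cap V(G_2)$, suppose $G-V(S)$ is disconnected and $S$ contains a nonedge $e=xy$. Suppose: (1) $G_2\cup e$ is an atom; (2) $G_1$ or $G_1\cup e$ is an atom; (3) $G_1-A$ is connected for every clique $A\subseteq V(S)$; (4) for every clique $A\subseteq V(S)$ with $x,y\notin A$, the vertices $x$ and $y$ lie in the same connected component of $G_2-A$. Then $G$ is an atom.
   Context: A clique is a set of pairwise adjacent vertices (possibly empty). A clique separator of a graph $H$ is a clique $U$ such that $H-U$ has at least two connected components. A graph is an atom if it is nonempty and has no clique separator. $H\cup e$ denotes $H$ with $e$ added as an edge. *)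

(* A graph is a relation [adj : rel T] on a finType T
   (symmetric and irreflexive for a simple graph); the graph on a vertex set
   [W : {set T}] is the subgraph of [adj] induced by W. *)
From mathcomp Require Import all_boot.
Set Implicit Arguments. Unset Strict Implicit. Unset Printing Implicit Defensive.

Definition induced_rel (T : finType) (adj : rel T) (W : {set T}) : rel T :=
  [rel a b | [&& a \in W, b \in W & adj a b]].

Definition same_comp (T : finType) (adj : rel T) (W : {set T}) (u v : T) : Prop :=
  u \in W /\ v \in W /\ connect (induced_rel adj W) u v.

Definition disconnected (T : finType) (adj : rel T) (W : {set T}) : Prop :=
  exists u v, u \in W /\ v \in W /\ ~ connect (induced_rel adj W) u v.

Definition connected_on (T : finType) (adj : rel T) (W : {set T}) : Prop :=
  forall u v, u \in W -> v \in W -> connect (induced_rel adj W) u v.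

Definition is_clique (T : finType) (adj : rel T) (U : {set T}) : Prop :=
  forall a b, a \in U -> b \in U -> a != b -> adj a b.

Definition clique_separator (T : finType) (adj : rel T) (W U : {set T}) : Prop :=
  U \subset W /\ is_clique adj U /\ disconnected adj (W :\: U).

Definition atom (T : finType) (adj : rel T) (W : {set T}) : Prop :=
  W != set0 /\ forall U : {set T}, ~ clique_separator adj W U.

Definition add_edge (T : finType) (adj : rel T) (x y : T) : rel T :=
  [rel a b | adj a b || ((a == x) && (b == y)) || ((a == y) && (b == x))].

(* Let U be a clique of G. Every edge of G lies in G1 or in G2, so U lies in
   V1 or in V2, and x, y are not both in U. Hypotheses (3) or (4) join x and y
   in G - U; hence a path of (G_i ∪ e) - U, which exists since G_i or G_i ∪ e
   is an atom, can be turned into a path of G - U by replacing the edge xy.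
   Thus V1 \ U and V2 \ U are each connected in G - U, and they share x or y,
   so G - U is connected. *)
From mathcomp Require Import all_boot.
Set Implicit Arguments. Unset Strict Implicit. Unset Printing Implicit Defensive.

Section InducedConnectivity.
Variable T : finType.
Implicit Types (r adj : rel T) (U W : {set T}).

Lemma setDIl_id W U : W :\: (U :&: W) = W :\: U.
Proof. by rewrite setDIr setDv setU0. Qed.

Lemma connect_induced_sub r W (W' : {set T}) a b :
  W \subset W' -> connect (induced_rel r W) a b -> connect (induced_rel r W') a b.
Proof.
move=> sWW'; apply: connect_sub => c d /and3P [cW dW rcd].
by apply/connect1/and3P; split; rewrite ?(subsetP sWW').
Qed.

Lemma connect_induced_add_edge adj x y W (W' : {set T}) a b :
  symmetric adj -> W \subset W' ->
  (x \in W -> y \in W -> connect (induced_rel adj W') x y) ->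
  connect (induced_rel (add_edge adj x y) W) a b ->
  connect (induced_rel adj W') a b.
Proof.
move=> adj_sym sWW' conn_xy; apply: connect_sub => c d /and3P [cW dW].
have symW' : connect_sym (induced_rel adj W').
  apply: sym_connect_sym => u v; rewrite /induced_rel /= adj_sym.
  by case: (u \in W'); case: (v \in W').
case/orP => [/orP [adj_cd | /andP [/eqP c_x /eqP d_y]] | /andP [/eqP c_y /eqP d_x]].
- by apply/connect1/and3P; split; rewrite ?(subsetP sWW').
- by subst c d; exact: conn_xy.
- by subst c d; rewrite symW'; exact: conn_xy.
Qed.

Lemma is_clique_add_edge adj x y U :
  is_clique adj U -> is_clique (add_edge adj x y) U.
Proof. by move=> cU a b aU bU ab; rewrite /add_edge /= cU. Qed.

Lemma atom_connect r W U a b :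
  atom r W -> is_clique r U -> a \in W :\: U -> b \in W :\: U ->
  connect (induced_rel r (W :\: U)) a b.
Proof.
move=> [_ no_sep] cU; rewrite -setDIl_id => aW bW.
apply/negPn/negP => not_ab; apply: (no_sep (U :&: W)); split; first exact: subsetIr.
split; last by exists a, b; split; [|split; [|apply/negP]].
by move=> c d /setIP [cU' _] /setIP [dU' _]; exact: cU.
Qed.

Lemma connect_setU r W1 W2 z :
  z \in W1 -> z \in W2 ->
  {in W1 &, forall a b, connect r a b} -> {in W2 &, forall a b, connect r a b} ->
  {in W1 :|: W2 &, forall a b, connect r a b}.
Proof.
move=> z1 z2 conn1 conn2 a b /setUP [a1 | a2] /setUP [b1 | b2].
- exact: conn1.
- by apply: connect_trans (conn1 a z a1 z1) (conn2 z b z2 b2).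
- by apply: connect_trans (conn2 a z a2 z2) (conn1 z b z1 b1).
- exact: conn2.
Qed.

Lemma atom_of_connected r W :
  W != set0 ->
  (forall U, U \subset W -> is_clique r U -> connected_on r (W :\: U)) ->
  atom r W.
Proof.
move=> W_n0 conn; split=> // U [sUW [cU [u [v [uW [vW not_uv]]]]]].
exact/not_uv/conn.
Qed.

End InducedConnectivity.

Section CliqueSumAtom.
Variables (T : finType) (adj : rel T) (V1 V2 : {set T}) (x y : T).
Hypothesis adj_sym : symmetric adj.
Hypothesis cover : V1 :|: V2 = [set: T].
Hypothesis edge_side :
  forall u v, adj u v -> (u \in V1) && (v \in V1) || (u \in V2) && (v \in V2).
Hypotheses (x12 : x \in V1 :&: V2) (y12 : y \in V1 :&: V2).
Hypotheses (neq_xy : x != y) (nonedge_xy : ~~ adj x y).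
Hypothesis atom2 : atom (add_edge adj x y) V2.
Hypothesis atom1 : atom adj V1 \/ atom (add_edge adj x y) V1.
Hypothesis conn1 : forall A : {set T}, A \subset V1 :&: V2 -> is_clique adj A ->
  connected_on adj (V1 :\: A).
Hypothesis conn2_xy : forall A : {set T}, A \subset V1 :&: V2 -> is_clique adj A ->
  x \notin A -> y \notin A -> same_comp adj (V2 :\: A) x y.

Variable U : {set T}.
Hypothesis cliqueU : is_clique adj U.

Local Notation D := ([set: T] :\: U).

Lemma clique_sub_side : U \subset V1 \/ U \subset V2.
Proof.
have in12 a : a \in V1 \/ a \in V2 by apply/orP; rewrite -in_setU cover inE.
case: (boolP (U \subset V1)) => [|/subsetPn [a aU a1']]; first by left.
right; apply/subsetP => b bU; apply/negPn/negP => b2'.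
have a2 : a \in V2 by case: (in12 a) => // a1; rewrite a1 in a1'.
have b1 : b \in V1 by case: (in12 b) => // b2; rewrite b2 in b2'.
have ab : a != b by apply: contraNneq a1' => ->.
by move: (edge_side (cliqueU aU bU ab)); rewrite (negbTE a1') (negbTE b2') andbF.
Qed.

Lemma clique_misses_xy : x \notin U \/ y \notin U.
Proof.
case: (boolP (x \in U)) => [xU | ]; [right | by left].
by apply: contraNN nonedge_xy => yU; exact: cliqueU.
Qed.

Lemma connect_xy : x \notin U -> y \notin U -> connect (induced_rel adj D) x y.
Proof.
move: x12 y12 => /setIP [x1 x2] /setIP [y1 y2] xU yU.
have cU A : is_clique adj (U :&: A).
  by move=> a b /setIP [aU _] /setIP [bU _]; exact: cliqueU.
have sub_D W : W :\: (U :&: W) \subset D by rewrite setDIl_id setSD ?subsetT.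
have notin_UI a W : a \notin U -> a \notin U :&: W by rewrite inE => /negbTE ->.
case: clique_sub_side => sU.
- have sA : U :&: V2 \subset V1 :&: V2 by rewrite setSI.
  have [_ [_ conn]] := conn2_xy sA (cU V2) (notin_UI x V2 xU) (notin_UI y V2 yU).
  exact: connect_induced_sub (sub_D V2) conn.
- have sA : U :&: V1 \subset V1 :&: V2 by rewrite setIC setIS.
  apply: connect_induced_sub (sub_D V1) (conn1 sA (cU V1) _ _);
    by rewrite setDIl_id !inE ?xU ?yU.
Qed.

Lemma connect_side W :
  atom adj W \/ atom (add_edge adj x y) W ->
  {in W :\: U &, forall a b, connect (induced_rel adj D) a b}.
Proof.
have sWD : W :\: U \subset D by rewrite setSD ?subsetT.
move=> [atomW | atomWe] a b aW bW.
- exact: connect_induced_sub sWD (atom_connect atomW cliqueU aW bW).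
- apply: connect_induced_add_edge adj_sym sWD _
    (atom_connect atomWe (is_clique_add_edge x y cliqueU) aW bW).
  by rewrite !inE => /andP [xU _] /andP [yU _]; exact: connect_xy.
Qed.

Lemma connected_minus_clique : connected_on adj D.
Proof.
have [z zU z12] : exists2 z, z \notin U & z \in V1 :&: V2.
  by case: clique_misses_xy => ?; [exists x | exists y].
move: z12 => /setIP [z1 z2] u v uD vD.
rewrite -cover setDUl in uD vD.
have zV1 : z \in V1 :\: U by rewrite inE zU.
have zV2 : z \in V2 :\: U by rewrite inE zU.
exact: (connect_setU zV1 zV2 (connect_side atom1) (connect_side (or_intror atom2)) uD vD).
Qed.

End CliqueSumAtom.

Theorem mainTheorem18 (T : finType) (adj : rel T)
  (adj_sym : symmetric adj) (adj_irr : irreflexive adj)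
  (V1 V2 : {set T}) (x y : T) :
  V1 :|: V2 = [set: T] ->
  (forall u v, adj u v -> (u \in V1) && (v \in V1) || (u \in V2) && (v \in V2)) ->
  disconnected adj (~: (V1 :&: V2)) ->
  x \in V1 :&: V2 -> y \in V1 :&: V2 -> x != y -> ~~ adj x y ->
  atom (add_edge adj x y) V2 ->
  (atom adj V1 \/ atom (add_edge adj x y) V1) ->
  (forall A : {set T}, A \subset V1 :&: V2 -> is_clique adj A ->
               connected_on adj (V1 :\: A)) ->
  (forall A : {set T}, A \subset V1 :&: V2 -> is_clique adj A ->
               x \notin A -> y \notin A -> same_comp adj (V2 :\: A) x y) ->
  atom adj [set: T].
Proof.
move=> cover edge_side _ x12 y12 neq_xy nonedge_xy atom2 atom1 conn1 conn2_xy.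
apply: atom_of_connected => [|U _ cliqueU]; first by apply/set0Pn; exists x.
exact: (connected_minus_clique adj_sym cover edge_side x12 y12 neq_xy nonedge_xy
  atom2 atom1 conn1 conn2_xy cliqueU).
Qed.
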